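(* Let $n\ge 4$ and let $f:\{0,1\}^n\to\{0,1\}$ be fully sensitive at $0$, and let $p$ be its symmetrization polynomial. Then \[ \sup_{x\in[0,n]} |p'''(x)| \geq 1 - p(3). \]
   Context: $f$ is fully sensitive at $0$ if $f(0^n)=0$ and $f(e_i)=1$ for every $i=1,\dots,n$, where $e_i$ is the $i$-th unit vector. Let $q$ be the unique multilinear real polynomial agreeing with $f$ on $\{0,1\}^n$, of degree $d(f)$. The symmetrization polynomial of $f$ is the univariate real polynomial $p$ of degree at most $d(f)$ such that $p(x_1+\dots+x_n) = \frac{1}{n!}\sum_{\pi\in S_n} q(\pi(x))$ for all $x\in\{0,1\}^n$, where $\pi(x)$ permutes the coordinates of $x$; equivalently, for $k=0,\dots,n$, $p(k)$ is the fraction of inputs of Hamming weight $k$ on which $f$ equals $1$ (such $p$ exists and is unique). *)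

From mathcomp Require Import all_boot all_order all_algebra.
Set Implicit Arguments. Unset Strict Implicit. Unset Printing Implicit Defensive.
Import Order.TTheory GRing.Theory Num.Theory.

Definition hweight (n : nat) (x : {ffun 'I_n -> bool}) : nat := #|[set i | x i]|.

Definition zero_pt (n : nat) : {ffun 'I_n -> bool} := [ffun _ => false].
Definition unit_pt (n : nat) (i : 'I_n) : {ffun 'I_n -> bool} := [ffun j => j == i].

Definition fully_sensitive_at0 (n : nat) (f : {ffun 'I_n -> bool} -> bool) : Prop :=
  f (zero_pt n) = false /\ forall i : 'I_n, f (unit_pt i) = true.

Definition frac_ones (R : fieldType) (n : nat) (f : {ffun 'I_n -> bool} -> bool) (k : nat) : R :=
  (#|[set x | (hweight (x : {ffun 'I_n -> bool}) == k) && f x]|%:R / #|[set x | hweight (x : {ffun 'I_n -> bool}) == k]|%:R)%R.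

(* p is the symmetrization polynomial of f: a real polynomial of degree at most n
   (d(f) <= n, and interpolation on 0..n by degree <= n is unique) with
   p(k) = frac_ones f k for k = 0..n. *)
Definition symmetrization_poly (R : fieldType) (n : nat) (f : {ffun 'I_n -> bool} -> bool)
  (p : {poly R}) : Prop :=
  (size p <= n.+1)%N /\ forall k : nat, (k <= n)%N -> (p.[k%:R] = frac_ones R f k)%R.

From mathcomp Require Import all_boot all_order all_algebra.
From mathcomp Require Import all_classical all_reals.
From mathcomp Require Import polyrcf ring lra.
Set Implicit Arguments. Unset Strict Implicit. Unset Printing Implicit Defensive.
Import Order.TTheory GRing.Theory Num.Theory.
Local Open Scope ring_scope.

(* Write D for the forward difference Dq(x) = q(x+1) - q(x).  Iterating the
   mean value theorem, D^3 p(m) = p'''(c) for some c in [m, m+3], so both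
   D^3 p(0) and D^3 p(1) are at most the supremum s of |p'''| on [0, n] when
   n >= 4.  Full sensitivity at 0 gives p(0) = 0 and p(1) = 1, and p(4) >= 0
   as a fraction, hence
     2s >= D^3 p(0) + D^3 p(1) = p(4) - 2 p(3) + 2 p(1) - p(0) >= 2 (1 - p(3)). *)

Section ForwardDifference.
Context {R : rcfType}.
Implicit Types (q : {poly R}) (a : R).

Definition fdiff q : {poly R} := q \Po ('X + 1) - q.

Lemma horner_fdiff q a : (fdiff q).[a] = q.[a + 1] - q.[a].
Proof. by rewrite /fdiff hornerD hornerN horner_comp !hornerE. Qed.

Lemma deriv_fdiff q : (fdiff q)^`() = fdiff q^`().
Proof. by rewrite /fdiff derivB deriv_comp derivD derivX derivC addr0 mulr1. Qed.

Lemma derivn_fdiff k q : (fdiff q)^`(k) = fdiff q^`(k).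
Proof. by elim: k => [//|k IHk]; rewrite !derivnS IHk deriv_fdiff. Qed.

Lemma iter_fdiff_mvt k q a :
  exists2 c, a <= c <= a + k%:R & (iter k fdiff q).[a] = (q^`(k)).[c].
Proof.
elim: k q a => [|k IHk] q a; first by exists a; rewrite ?addr0 ?lexx.
rewrite iterSr; have [b /andP[ab bk] ->] := IHk (fdiff q) a.
have b_lt : b < b + 1 by rewrite ltrDl.
rewrite derivn_fdiff horner_fdiff; have [c /andP[bc cb] ->] := poly_mvt (q^`(k)) b_lt.
exists c; last by rewrite derivnS addrAC subrr add0r mulr1.
by rewrite (le_trans ab (ltW bc)) (le_trans (ltW cb)) // -natr1 addrA lerD2r.
Qed.

Lemma horner_iter3_fdiff q (m : nat) : (iter 3 fdiff q).[m%:R] =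
  q.[m.+3%:R] - 3 * q.[m.+2%:R] + 3 * q.[m.+1%:R] - q.[m%:R].
Proof. rewrite /= !horner_fdiff !natr1; ring. Qed.

End ForwardDifference.

Lemma horner_norm_le_sup (R : realType) (q : {poly R}) (a b c : R) :
  a <= c <= b -> `|q.[c]| <= sup [set `|q.[x]| | x in `[a, b]]%classic.
Proof.
move=> c_ab; set S := [set _ | _ in _]%classic.
have c_in : S `|q.[c]| by exists c; rewrite //= in_itv.
have [ub ub_ab] := poly_itv_bound q a b.
have S_ub : has_ubound S.
  by exists ub => _ [x x_ab <-]; apply: ub_ab; rewrite /= in_itv in x_ab.
by apply: sup_upper_bound; first split; first exists `|q.[c]|.
Qed.

Section HammingWeight.
Variable n : nat.
Implicit Types (x : {ffun 'I_n -> bool}) (f : {ffun 'I_n -> bool} -> bool).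

Lemma hweight_eq0 x : hweight x = 0%N -> x = zero_pt n.
Proof.
move=> /eqP; rewrite cards_eq0 => /eqP/setP x0.
by apply/ffunP => i; have := x0 i; rewrite !inE ffunE => ->.
Qed.

Lemma hweight_unit_pt (i : 'I_n) : hweight (unit_pt i) = 1%N.
Proof.
rewrite /hweight (_ : [set j | _] = [set i]) ?cards1 //.
by apply/setP => j; rewrite !inE ffunE.
Qed.

Lemma hweight_eq1 x : hweight x = 1%N -> exists i, x = unit_pt i.
Proof.
move=> /eqP/cards1P [i /setP x1]; exists i.
by apply/ffunP => j; have := x1 j; rewrite !inE ffunE => ->.
Qed.

Variable R : numFieldType.

Lemma frac_ones_ge0 f k : 0 <= frac_ones R f k.
Proof. by rewrite divr_ge0 ?ler0n. Qed.

Lemma frac_ones_eq0 f k :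
  (forall x, hweight x = k -> f x = false) -> frac_ones R f k = 0.
Proof.
move=> f0; rewrite /frac_ones (_ : #|[set x | _ & _]| = 0%N) ?mul0r //.
by apply: eq_card0 => x; rewrite !inE; case: eqP => // /f0 ->.
Qed.

Lemma frac_ones_eq1 f k x0 : hweight x0 = k ->
  (forall x, hweight x = k -> f x) -> frac_ones R f k = 1.
Proof.
move=> x0k f1; rewrite /frac_ones (_ : [set x | _ & _] = [set x | hweight x == k]).
  by apply: divff; rewrite pnatr_eq0 -lt0n card_gt0; apply/set0Pn; exists x0; rewrite inE x0k.
by apply/setP => x; rewrite !inE; case: eqP => // /f1 ->.
Qed.

End HammingWeight.

Local Open Scope classical_set_scope.

Theorem lemma2 (R : realType) (n : nat) (f : {ffun 'I_n -> bool} -> bool) (p : {poly R}) :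
  (4 <= n)%N ->
  fully_sensitive_at0 f ->
  symmetrization_poly f p ->
  1 - p.[3%:R] <= sup [set `|(p^`(3)).[x]| | x in `[0, n%:R]].
Proof.
move=> n_ge4 [f0 f1] [_ p_frac].
have p0 : p.[0%:R] = 0.
  by rewrite p_frac // frac_ones_eq0 // => x /hweight_eq0 ->.
have n_gt0 : (0 < n)%N by apply: leq_trans n_ge4.
have p1 : p.[1%:R] = 1.
  rewrite p_frac // (frac_ones_eq1 _ (hweight_unit_pt (Ordinal n_gt0))) //.
  by move=> x /hweight_eq1 [i ->].
have p4 : 0 <= p.[4%:R] by rewrite p_frac ?frac_ones_ge0.
have diff3_le_sup (m : nat) : (m + 3 <= n)%N ->
    `|(iter 3 fdiff p).[m%:R]| <= sup [set `|(p^`(3)).[x]| | x in `[0, n%:R]].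
  move=> m3n; have [c /andP[mc cm] ->] := iter_fdiff_mvt 3 p m%:R.
  apply: horner_norm_le_sup; rewrite (le_trans _ mc) //=.
  by rewrite (le_trans cm) // -natrD ler_nat.
have /ler_normlP[_ diff3_0] := diff3_le_sup 0%N (ltnW n_ge4).
have /ler_normlP[_ diff3_1] := diff3_le_sup 1%N n_ge4.
rewrite !horner_iter3_fdiff p0 p1 in diff3_0 diff3_1.
lra.
Qed.
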